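(* For each $n\geq1$, $x-1$ divides $H_{1,n}(x,y)$ and $(x-1)^2$ divides $H_{0,n}(x,y)$ in $\mathbb{Z}[x,y]$.
   Context: Graphs are finite. For a graph $G$, a spanning subgraph $A$ has vertex set $V(G)$ and edge set $E(A)\subseteq E(G)$; $k(A)$ is its number of components, $r(A)=|V(G)|-k(A)$, $n(A)=|E(A)|-r(A)$; the weight of $A$ is $(x-1)^{r(G)-r(A)}(y-1)^{n(A)}$. The graphs $\Sigma_n$ ($n\ge1$; Schreier graphs of the Hanoi Towers group $H^{(3)}$ with loops removed) each have three outmost vertices top, left, right: $\Sigma_1$ is the triangle $K_3$; $\Sigma_{n+1}$ is the disjoint union of three copies $G_1,G_2,G_3$ of $\Sigma_n$ together with three new edges joining left$(G_1)$ to top$(G_2)$, right$(G_1)$ to top$(G_3)$, and right$(G_2)$ to left$(G_3)$; its outmost vertices are top$(G_1)$, left$(G_2)$, right$(G_3)$. $H_{1,n}$ is the sum of the weights (with $G=\Sigma_n$) of the spanning subgraphs of $\Sigma_n$ in which the left and right outmost vertices lie in one component and the top one in another; $H_{0,n}$ is the sum over spanning subgraphs in which the three outmost vertices lie in three distinct components. *)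

(* Z[x,y] is represented as {poly {poly int}}:
   x = 'X%:P (inner variable, constant in y), y = 'X (outer variable). *)
From HB Require Import structures.
From mathcomp Require Import all_boot all_order all_algebra.
Set Implicit Arguments. Unset Strict Implicit. Unset Printing Implicit Defensive.
Import GRing.Theory.

(* Vertices of Sigma_n: words of length n over {0,1,2}; the first letter
   records in which copy G_1 (0), G_2 (1), G_3 (2) of Sigma_(n-1) the vertex lies.
   Adjacency: u = i::u', v = j::v' are adjacent iff either i = j and u',v'
   are adjacent (edge inside a copy), or i <> j and u' = j^(n-1), v' = i^(n-1)
   (the three connecting edges left(G1)-top(G2), right(G1)-top(G3),
   right(G2)-left(G3), with top = 0^m, left = 1^m, right = 2^m). *)
Fixpoint hadj (u v : seq 'I_3) : bool :=
  match u, v with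
  | i :: u', j :: v' =>
      if i == j then hadj u' v'
      else [&& u' == nseq (size u') j, v' == nseq (size v') i
             & size u' == size v']
  | _, _ => false
  end.

Definition vtx (n : nat) := (n.-tuple 'I_3)%type.

Definition sigma_adj (n : nat) : rel (vtx n) := fun u v => hadj u v.

Definition sigma_E (n : nat) : {set vtx n * vtx n} :=
  [set p | sigma_adj p.1 p.2 && (enum_rank p.1 < enum_rank p.2)%N].

Definition sub_rel (n : nat) (A : {set vtx n * vtx n}) : rel (vtx n) :=
  fun u v => ((u, v) \in A) || ((v, u) \in A).

Definition ncomp (n : nat) (A : {set vtx n * vtx n}) : nat :=
  n_comp (connect (sub_rel A)) (@predT (vtx n)).

(* r(A) = |V| - k(A),  n(A) = |A| - r(A)  (both are nonnegative). *)
Definition rk (n : nat) (A : {set vtx n * vtx n}) : nat := (#|[set: vtx n]| - ncomp A)%N.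
Definition nul (n : nat) (A : {set vtx n * vtx n}) : nat := (#|A| - rk A)%N.

Definition PX : {poly {poly int}} := ('X)%:P.
Definition PY : {poly {poly int}} := 'X.

Definition weight (n : nat) (A : {set vtx n * vtx n}) : {poly {poly int}} :=
  ((PX - 1) ^+ (rk (sigma_E n) - rk A) * (PY - 1) ^+ (nul A))%R.

Definition top (n : nat) : vtx n := nseq_tuple n (@Ordinal 3 0 isT).
Definition lft (n : nat) : vtx n := nseq_tuple n (@Ordinal 3 1 isT).
Definition rgt (n : nat) : vtx n := nseq_tuple n (@Ordinal 3 2 isT).

Definition H1 (n : nat) : {poly {poly int}} :=
  (\sum_(A : {set vtx n * vtx n} |
          [&& A \subset sigma_E n,
              connect (sub_rel A) (lft n) (rgt n)
            & ~~ connect (sub_rel A) (top n) (lft n)]) weight A)%R.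

Definition H0 (n : nat) : {poly {poly int}} :=
  (\sum_(A : {set vtx n * vtx n} |
          [&& A \subset sigma_E n,
              ~~ connect (sub_rel A) (top n) (lft n),
              ~~ connect (sub_rel A) (top n) (rgt n)
            & ~~ connect (sub_rel A) (lft n) (rgt n)]) weight A)%R.

From HB Require Import structures.
From mathcomp Require Import all_boot all_order all_algebra zify.
Import GRing.Theory.

(* Only the fact that the outmost vertices are connected in G = Sigma_n
   matters.  If m vertices lie in m distinct components of a spanning subgraph
   A but in one component of G, then k(A) >= k(G) + m - 1, since every
   component of G is a union of components of A and one of them contains m of
   those.  Hence the exponent r(G) - r(A) = k(A) - k(G) of x - 1 is at least
   m - 1 in every summand of H_{1,n} (m = 2) and of H_{0,n} (m = 3). *)

Section ComponentCount.
Variables (T : finType) (e1 e2 : rel T).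
Hypotheses (sym1 : connect_sym e1) (sym2 : connect_sym e2)
  (sub12 : subrel e1 (connect e2)).
Local Notation root := fingraph.root.

Lemma n_comp_roots (e : rel T) : n_comp e T = #|[set x | roots e x]|.
Proof. by apply: eq_card => x; rewrite !inE andbT. Qed.

Lemma n_comp_subrel x0 s :
  pairwise (fun x y => ~~ connect e1 x y) (x0 :: s) -> all (connect e2 x0) s ->
  n_comp e2 T + size s <= n_comp e1 T.
Proof.
rewrite pairwise_cons => /andP[/allP x0_s pw_s] /allP conn_s.
have conn12 : subrel (connect e1) (connect e2) := connect_sub sub12.
set S := [set x in map (root e1) s].
have cardS : #|S| = size s.
  rewrite cardsE -(size_map (root e1)); apply/card_uniqP.
  apply: (@pairwise_uniq _ (fun x y => x != y)); first by move=> x; rewrite eqxx.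
  rewrite pairwise_map; apply: sub_pairwise pw_s => x y.
  by rewrite /= (root_connect sym1).
have root_x0_S : root e1 x0 \notin map (root e1) s.
  apply/negP => /mapP[x xs /eqP].
  by rewrite (root_connect sym1); apply/negP/x0_s.
have SR1 : S \subset [set x | roots e1 x].
  by apply/subsetP => r; rewrite !inE => /mapP[x _ ->]; rewrite (roots_root sym1).
(* root e2 maps the e1-roots outside S onto all e2-roots, since S itself
   lands on root e2 (root e1 x0). *)
have R2_img : [set x | roots e2 x] \subset root e2 @: ([set x | roots e1 x] :\: S).
  apply/subsetP => y; rewrite inE => /eqP root_y.
  have {root_y}-> : y = root e2 (root e1 y).
    rewrite -{1}root_y; apply/(fingraph.rootP sym2).
    by rewrite sym2 conn12 // sym1 connect_root.
  case: (boolP (root e1 y \in map (root e1) s)) => [/mapP[x xs ->]|yS].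
    have -> : root e2 (root e1 x) = root e2 (root e1 x0).
      apply/(fingraph.rootP sym2); apply: (@connect_trans _ _ x).
        by rewrite conn12 // sym1 connect_root.
      rewrite sym2; apply: connect_trans _ (conn_s x xs).
      by rewrite conn12 // sym1 connect_root.
    by rewrite imset_f // !inE (roots_root sym1) root_x0_S.
  by rewrite imset_f // !inE (roots_root sym1) andbT yS.
rewrite !n_comp_roots -cardS addnC -leq_subRL ?subset_leq_card //.
rewrite -(setIidPr SR1) -cardsD.
exact: leq_trans (subset_leq_card R2_img) (leq_imset_card _ _).
Qed.

End ComponentCount.

Arguments n_comp_subrel {T e1 e2}.

Lemma connect_idem {T : finType} (e : rel T) : connect (connect e) =2 connect e.
Proof.
move=> x y; apply/idP/idP; first exact: connect_sub.
by apply: connect_sub => a b /connect1/connect1.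
Qed.

Lemma hadj_sym : symmetric hadj.
Proof.
elim=> [|i u IH] [|j v] //=.
rewrite eq_sym; case: (j == i); first exact: IH.
by rewrite andbCA [size v == _]eq_sym.
Qed.

Lemma hadj_irr : irreflexive hadj.
Proof. by elim=> //= i u IH; rewrite eqxx. Qed.

Lemma sub_rel_sym {n} (A : {set vtx n * vtx n}) : symmetric (sub_rel A).
Proof. by move=> u v; rewrite /sub_rel orbC. Qed.

Lemma sub_rel_sigma_E n : sub_rel (sigma_E n) =2 @sigma_adj n.
Proof.
move=> u v; rewrite /sub_rel /sigma_E !inE /= /sigma_adj [hadj v u]hadj_sym.
case: (eqVneq u v) => [->|neq_uv]; first by rewrite hadj_irr.
case: ltngtP => [||/val_inj/enum_rank_inj eq_uv]; rewrite ?andbT ?andbF ?orbF //.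
by rewrite eq_uv eqxx in neq_uv.
Qed.

Lemma connect_sigma_cons {n} (i : 'I_3) {u v : vtx n} :
  connect (@sigma_adj n) u v ->
  connect (@sigma_adj n.+1) (cons_tuple i u) (cons_tuple i v).
Proof.
move=> /connectP[p + ->]; elim: p u => [|w p IH] u /=; first by rewrite connect0.
move=> /andP[uw wp]; apply: connect_trans (IH _ wp).
by apply: connect1; rewrite /sigma_adj /= eqxx.
Qed.

(* The outmost vertices c^n and d^n are joined through c d^(n-1) -- d c^(n-1). *)
Lemma connect_outmost n (c d : 'I_3) :
  connect (@sigma_adj n) (nseq_tuple n c) (nseq_tuple n d).
Proof.
elim: n c d => [|n IH] c d; first by apply: eq_connect0; apply: val_inj.
have nseqS a : nseq_tuple n.+1 a = cons_tuple a (nseq_tuple n a) by apply: val_inj.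
rewrite !nseqS; case: (eqVneq c d) => [->|neq_cd]; first exact: connect0.
apply: connect_trans (connect_sigma_cons c (IH c d)) _.
apply: connect_trans _ (connect_sigma_cons d (IH c d)).
by apply: connect1; rewrite /sigma_adj /= (negbTE neq_cd) !size_nseq !eqxx.
Qed.

Lemma ncompE n (A : {set vtx n * vtx n}) : ncomp A = n_comp (sub_rel A) predT.
Proof. exact: (eq_n_comp (connect_idem (sub_rel A))). Qed.

Lemma rk_sigma_E_gap n (A : {set vtx n * vtx n}) (x0 : vtx n) (s : seq (vtx n)) :
  A \subset sigma_E n ->
  pairwise (fun x y => ~~ connect (sub_rel A) x y) (x0 :: s) ->
  all (connect (@sigma_adj n) x0) s ->
  size s <= rk (sigma_E n) - rk A.
Proof.
move=> sub_A pw_s conn_s.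
have sub_AE : subrel (sub_rel A) (connect (sub_rel (sigma_E n))).
  move=> u v /orP[] uv; apply: connect1;
  by rewrite /sub_rel (subsetP sub_A _ uv) ?orbT.
have := n_comp_subrel (sym_connect_sym (sub_rel_sym A))
  (sym_connect_sym (sub_rel_sym _)) sub_AE _ _ pw_s.
rewrite -!ncompE (eq_all (eq_connect (sub_rel_sigma_E n) x0)) => /(_ conn_s).
have : ncomp A <= #|[set: vtx n]|.
  by rewrite ncompE n_comp_roots; apply: subset_leq_card; apply: subsetT.
(* [set] merges two syntactically different instances of [size s] for lia. *)
rewrite /rk; set m := size s; lia.
Qed.

Lemma sum_expr_factor {R : pzSemiRingType} {I : Type} {r : seq I} {P : pred I}
    {a : R} {m : I -> nat} {F : I -> R} k :
  (forall i, P i -> (k <= m i)%N) ->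
  (\sum_(i <- r | P i) a ^+ m i * F i =
   a ^+ k * \sum_(i <- r | P i) a ^+ (m i - k) * F i)%R.
Proof.
move=> k_le_m; rewrite mulr_sumr; apply: eq_bigr => i /k_le_m k_le_mi.
by rewrite mulrA -exprD subnKC.
Qed.

Theorem lemma4p5 (n : nat) (hn : (0 < n)%N) :
  (exists Q : {poly {poly int}}, H1 n = ((PX - 1) * Q)%R) /\
  (exists Q : {poly {poly int}}, H0 n = ((PX - 1) ^+ 2 * Q)%R).
Proof.
have out c d := connect_outmost n c d.
split; eexists.
- rewrite /H1 /weight (sum_expr_factor 1) ?expr1 // => A /and3P[sub_A _ top_lft].
  apply: (rk_sigma_E_gap _ _ (top n) [:: lft n] sub_A) => /=.
    by rewrite top_lft.
  by rewrite out.
- rewrite /H0 /weight (sum_expr_factor 2) // => A /and4P[sub_A top_lft top_rgt lft_rgt].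
  apply: (rk_sigma_E_gap _ _ (top n) [:: lft n; rgt n] sub_A) => /=.
    by rewrite top_lft top_rgt lft_rgt.
  by rewrite !out.
Qed.
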